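(* Let $F$ be a positive integer. (1) $\#(\mathrm{C}(F)\setminus\theta(\mathrm{C}(F)))=\lfloor\frac{F-1}{2}\rfloor$. (2) If $P,Q$ are irreducible numerical semigroups with Frobenius number $F$ such that $\mathrm{m}(Q)<\frac{F}{2}$ and $P=(Q\setminus\{\mathrm{m}(Q)\})\cup\{F-\mathrm{m}(Q)\}$ (i.e. $Q$ is a child of $P$ in the tree $\mathrm{G}(\mathcal{I}(F))$), then $\#(Q\setminus\theta(Q))<\#(P\setminus\theta(P))$.
   Context: A numerical semigroup is a subset $S\subseteq\mathbb{N}$ closed under addition with $0\in S$ and $\mathbb{N}\setminus S$ finite; $\mathrm{F}(S)=\max(\mathbb{Z}\setminus S)$; $\mathrm{m}(S)=\min(S\setminus\{0\})$; $\langle X\rangle$ is the submonoid generated by $X$. Irreducible: not the intersection of two numerical semigroups properly containing it. $\Delta(S)=\{s\in S\mid s<\frac{\mathrm{F}(S)}{2}\}$, $\theta(S)=\langle\Delta(S)\rangle\cup\{\mathrm{F}(S)+1,\mathrm{F}(S)+2,\ldots\}$. $\mathrm{C}(F)=\{0\}\cup\{x\in\mathbb{N}\mid x\ge\frac{F+1}{2}\}\setminus\{F\}$ if $F$ is odd and $\mathrm{C}(F)=\{0\}\cup\{x\in\mathbb{N}\mid x\ge\frac{F}{2}+1\}\setminus\{F\}$ if $F$ is even (the unique irreducible numerical semigroup with Frobenius number $F$ and multiplicity greater than $F/2$). $\mathcal{I}(F)$ is the set of irreducible numerical semigroups with Frobenius number $F$, and $\mathrm{G}(\mathcal{I}(F))$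 is the graph on $\mathcal{I}(F)$ with an edge $(T,S)$ whenever $\mathrm{m}(T)<\frac{F}{2}$ and $S=(T\setminus\{\mathrm{m}(T)\})\cup\{F-\mathrm{m}(T)\}$. *)

From mathcomp Require Import all_boot.
Set Implicit Arguments. Unset Strict Implicit. Unset Printing Implicit Defensive.

Definition natset := nat -> Prop.

Definition numerical (S : natset) : Prop :=
  S 0 /\ (forall x y, S x -> S y -> S (x + y)) /\
  exists N, forall x, N <= x -> S x.

Definition frobenius (S : natset) (F : nat) : Prop :=
  ~ S F /\ forall x, F < x -> S x.

Definition multiplicity (S : natset) (m : nat) : Prop :=
  S m /\ 0 < m /\ forall x, S x -> 0 < x -> m <= x.

Definition irreducible (S : natset) : Prop :=
  numerical S /\
  ~ (exists S1 S2 : natset, numerical S1 /\ numerical S2 /\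
       (forall x, S x -> S1 x) /\ (exists x, S1 x /\ ~ S x) /\
       (forall x, S x -> S2 x) /\ (exists x, S2 x /\ ~ S x) /\
       (forall x, S x <-> S1 x /\ S2 x)).

Definition gen (X : natset) : natset :=
  fun x => exists s : seq nat, (forall y, y \in s -> X y) /\ sumn s = x.

Definition Delta (S : natset) : natset :=
  fun s => S s /\ exists F, frobenius S F /\ 2 * s < F.

Definition theta (S : natset) : natset :=
  fun x => gen (Delta S) x \/ exists F, frobenius S F /\ F < x.

Definition CF (F : nat) : natset :=
  fun x => x = 0 \/
    (x <> F /\ (if odd F then F + 1 <= 2 * x else F + 2 <= 2 * x)).

Definition card_is (A : natset) (n : nat) : Prop :=
  exists s : seq nat, uniq s /\ size s = n /\ forall x, x \in s <-> A x.

Definition setdiff (A B : natset) : natset := fun x => A x /\ ~ B x.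

From mathcomp Require Import all_boot.
From Stdlib Require Import ClassicalEpsilon.
From mathcomp Require Import zify.
Set Implicit Arguments. Unset Strict Implicit.

(* Every element of C(F) other than 0 is at least F/2, so Delta(C(F)) = {0} and
   theta(C(F)) = {0} u (F, oo); the gaps counted in (1) are the integers in
   (F/2, F).  For (2), the small elements of P are small elements of Q, so
   theta(P) is contained in theta(Q); every element of Q \ theta(Q) lies in
   [F/2, F) and hence stays in P \ theta(P), while F - m(Q) is a new element of
   P \ theta(P): it is not in Q, whereas <Delta(P)> is contained in Q. *)

Lemma frobenius_uniq (S : natset) F1 F2 :
  frobenius S F1 -> frobenius S F2 -> F1 = F2.
Proof.
move=> [nS1 hS1] [nS2 hS2]; case: (ltngtP F1 F2) => // lt12.
- by case: nS2; apply: hS1.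
- by case: nS1; apply: hS2.
Qed.

Section Generated.

Variable X : natset.

Lemma gen1 x : X x -> gen X x.
Proof.
by move=> Xx; exists [:: x]; split; [move=> y; rewrite inE => /eqP -> | rewrite /= addn0].
Qed.

Lemma gen_mono (Y : natset) x : (forall y, X y -> Y y) -> gen X x -> gen Y x.
Proof. by move=> XY [s [Xs <-]]; exists s; split=> // y /Xs /XY. Qed.

Lemma gen_sub_monoid (S : natset) x :
  S 0 -> (forall y z, S y -> S z -> S (y + z)) ->
  (forall y, X y -> S y) -> gen X x -> S x.
Proof.
move=> S0 Sadd XS [s [Xs <-]]; elim: s Xs => [|a s IHs] Xs //=.
apply: Sadd; first by apply/XS/Xs; rewrite inE eqxx.
by apply: IHs => y sy; apply: Xs; rewrite inE sy orbT.
Qed.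

End Generated.

Section ThetaFrobenius.

Variables (S : natset) (F : nat).
Hypothesis frS : frobenius S F.

Lemma Delta_frobenius x : Delta S x <-> S x /\ 2 * x < F.
Proof.
split; last by move=> [Sx ltxF]; split=> //; exists F.
by move=> [Sx [F' [frS' ltxF']]]; rewrite -(frobenius_uniq frS frS') in ltxF'.
Qed.

Lemma theta_frobenius x : theta S x <-> gen (Delta S) x \/ F < x.
Proof.
split; move=> [genx | bigx]; [by left | | by left | by right; exists F].
by right; case: bigx => F' [frS' ltF'x]; rewrite (frobenius_uniq frS frS').
Qed.

Lemma theta_gap_bounds x : setdiff S (theta S) x -> F <= 2 * x /\ x < F.
Proof.
move=> [Sx thetax]; split.
  rewrite leqNgt; apply/negP => small; apply/thetax/theta_frobenius.
  by left; apply/gen1/Delta_frobenius.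
rewrite ltnNge leq_eqVlt; apply/negP => /orP [/eqP Fx | ltFx].
  by case: frS => + _; rewrite Fx.
by apply/thetax/theta_frobenius; right.
Qed.

End ThetaFrobenius.

Lemma card_is_bounded (A : natset) N : (forall x, A x -> x < N) -> exists n, card_is A n.
Proof.
move=> boundA; set s := [seq x <- iota 0 N | excluded_middle_informative (A x)].
exists (size s), s; split; first by rewrite filter_uniq // iota_uniq.
split=> // x; rewrite mem_filter mem_iota add0n /=.
case: excluded_middle_informative => [Ax | nAx] /=; last by split.
by rewrite boundA.
Qed.

Lemma card_is_ltn (A B : natset) n k y :
  card_is A n -> card_is B k -> (forall x, A x -> B x) -> B y -> ~ A y -> n < k.
Proof.
move=> [sA [uA [<- memA]]] [sB [uB [<- memB]]] AB By nAy.
apply: (@uniq_leq_size _ (y :: sA)); first by rewrite /= uA andbT; apply/negP => /memA.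
move=> z; rewrite inE => /orP [/eqP -> | /memA /AB /memB //]; exact/memB.
Qed.

Section CanonicalIrreducible.

Variable F : nat.
Hypothesis F_gt0 : 0 < F.

Lemma CF_large x :
  (if odd F then F + 1 <= 2 * x else F + 2 <= 2 * x) <-> F./2 < x.
Proof. by have := odd_double_half F; case: (odd F) => /=; split; lia. Qed.

Lemma CF_frobenius : frobenius (CF F) F.
Proof.
split; first by case=> [F0 | []//]; move: F_gt0; rewrite F0.
by move=> x ltFx; right; split; [lia | apply/CF_large; have := odd_double_half F; lia].
Qed.

Lemma CF_gapE x : setdiff (CF F) (theta (CF F)) x <-> F./2 < x < F.
Proof.
have frC := CF_frobenius; split.
  move=> gapx; have [halfx ltxF] := theta_gap_bounds frC gapx.
  by move: gapx => [[x0 | [_ /CF_large ?]] _]; lia.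
move=> /andP [halfx ltxF]; split; first by right; split; [lia | exact/CF_large].
move/(theta_frobenius frC) => [genx | ]; last lia.
suff : 0 = x by lia.
apply: (gen_sub_monoid (S := eq 0) _ _ _ genx) => // [y z <- <- // | y].
by move/(Delta_frobenius frC) => [[-> // | [_ /CF_large ?]] ?]; lia.
Qed.

Lemma card_CF_gaps : card_is (setdiff (CF F) (theta (CF F))) ((F - 1) %/ 2).
Proof.
exists (iota F./2.+1 (F - F./2.+1)); split; first exact: iota_uniq.
split; first by rewrite size_iota; have := odd_double_half F; lia.
by move=> x; rewrite mem_iota CF_gapE; split=> /andP [? ?]; apply/andP; split; lia.
Qed.

End CanonicalIrreducible.

Lemma frobenius_subn_notin (S : natset) F m :
  frobenius S F -> (forall y z, S y -> S z -> S (y + z)) ->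
  m <= F -> S m -> ~ S (F - m).
Proof. by move=> [nSF _] Sadd le_mF Sm /(Sadd _ _)/(_ Sm); rewrite subnK. Qed.

Section Child.

Variables (P Q : natset) (F m : nat).
Hypotheses (frP : frobenius P F) (frQ : frobenius Q F) (numQ : numerical Q).
Hypotheses (mulQ : multiplicity Q m) (small_m : 2 * m < F).
Hypothesis PE : forall x, P x <-> ((Q x /\ x <> m) \/ x = F - m).

Lemma Delta_child_sub x : Delta P x -> Delta Q x.
Proof.
move/(Delta_frobenius frP) => [Px smallx]; apply/(Delta_frobenius frQ); split=> //.
by case/PE: Px => [[] | xE] //; lia.
Qed.

Lemma gen_Delta_child_sub x : gen (Delta P) x -> Q x.
Proof.
have [Q0 [Qadd _]] := numQ.
by apply: gen_sub_monoid => // y /Delta_child_sub [].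
Qed.

Lemma theta_gaps_child_sub x : setdiff Q (theta Q) x -> setdiff P (theta P) x.
Proof.
move=> gapx; have [halfx ltxF] := theta_gap_bounds frQ gapx.
case: gapx => Qx thetax; split; first by apply/PE; left; split=> //; lia.
move/(theta_frobenius frP) => [genx | ]; last lia.
by apply/thetax/(theta_frobenius frQ); left; apply: gen_mono genx; apply: Delta_child_sub.
Qed.

Lemma notin_child : ~ Q (F - m).
Proof.
have [_ [Qadd _]] := numQ; have [Qm _] := mulQ.
by apply: frobenius_subn_notin frQ Qadd _ Qm; lia.
Qed.

Lemma theta_gap_parent_new : setdiff P (theta P) (F - m).
Proof.
split; first by apply/PE; right.
move/(theta_frobenius frP) => [/gen_Delta_child_sub | ]; [exact: notin_child | lia].
Qed.

End Child.

Theorem proposition41 (F : nat) (HF : 0 < F) :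
  card_is (setdiff (CF F) (theta (CF F))) ((F - 1) %/ 2)
  /\
  (forall (P Q : natset) (mQ : nat),
      irreducible P -> frobenius P F ->
      irreducible Q -> frobenius Q F ->
      multiplicity Q mQ -> 2 * mQ < F ->
      (forall x, P x <-> ((Q x /\ x <> mQ) \/ x = F - mQ)) ->
      exists nQ nP, card_is (setdiff Q (theta Q)) nQ /\
                    card_is (setdiff P (theta P)) nP /\ nQ < nP).
Proof.
split; first exact: card_CF_gaps.
move=> P Q m _ frP [numQ _] frQ mulQ small_m PE.
have [nQ cardQ] := card_is_bounded (fun x gapx => (theta_gap_bounds frQ gapx).2).
have [nP cardP] := card_is_bounded (fun x gapx => (theta_gap_bounds frP gapx).2).
exists nQ, nP; do 2!split=> //.
apply: (card_is_ltn cardQ cardP (theta_gaps_child_sub frP frQ small_m PE)).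
  exact: (theta_gap_parent_new frP frQ numQ mulQ small_m PE).
by move=> [/(notin_child frQ numQ mulQ small_m)].
Qed.
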